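(* Let $F$ be a topological hyperfield and $*\in\{s,w\}$. Let $M$ be a rank $r$ matroid on a finite set $E$ such that $\operatorname{Real}^*_F(M)\ne\emptyset$, and let $A\subseteq E$ have $r+1$ elements. Let $\tilde\varphi:A^r\to F$ be an alternating function that is nonzero exactly on the ordered bases of $M$ contained in $A$. Then there is a Grassmann–Plücker function $\varphi:E^r\to F$ of the appropriate type ($*$) that extends $\tilde\varphi$ and satisfies $[\varphi]\in\operatorname{Real}^*_F(M)$.
   Context: Hyperfields. A hyperfield $(F,\odot,\boxplus,1,0)$ has the following data and axioms. - $\odot$ is a commutative multiplication and $\boxplus$ is a hyperaddition assigning to each $x,y$ a nonempty subset $x\boxplus y\subseteq F$ (extended to subsets by unions). - $\boxplus$ is commutative and associative, and $x\boxplus 0=\{x\}$. - Each $x$ has a unique $-x$ with $0\in x\boxplus(-x)$, and $x\in y\boxplus z \iff z\in x\boxplus(-y)$. - $(F\setminus\{0\},\odot,1)$ is an abelian group $F^\times$, $0\odot x=0$, and $x\odot(y\boxplus z)=(x\odot y)\boxplus(x\odot z)$. A topological hyperfield is a hyperfield with a topology in which $F\setminus\{0\}$ is open, multiplication is continuous, and inversion on $F^\times$ is continuous. Grassmannians. A function $\varphi:E^r\to F$ is alternating if permuting arguments by $\sigma$ multiplies the value by $\operatorname{sign}\sigma$. A strong Grassmann–Plücker (GP) function of rank $r$ on $E$ is a function $\varphi:E^r\to F$ with the following properties. - $\varphi$ is not identically $0$. - $\varphi$ is alternating. - For all $(i_1,\dots,i_{r+1})\in E^{r+1}$ and $(j_1,\dots,j_{r-1})\in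 E^{r-1}$: $$0\in\boxplus_{k=1}^{r+1}(-1)^k\varphi(i_1,\dots,\widehat{i_k},\dots,i_{r+1})\odot\varphi(i_k,j_1,\dots,j_{r-1}).$$ A weak GP function is a function $\varphi:E^r\to F$ with the following properties. - $\varphi$ is nonzero and alternating. - Its support is the set of bases of a matroid. - The relation holds when $|\{i\}\setminus\{j\}|=3$. $\operatorname{Gr}^*(r,F^E)$ is the set of strong ($*=s$) or weak ($*=w$) GP functions modulo $\varphi\sim\alpha\varphi$, $\alpha\in F^\times$. Realization spaces. For a matroid $M$ on $E$ of rank $r$, $\operatorname{Real}^*_F(M)$ is the set of $[\varphi]\in\operatorname{Gr}^*(r,F^E)$ such that $\varphi$ is nonzero exactly on the ordered bases of $M$. An ordered basis is an $r$-tuple of distinct elements whose underlying set is a basis. *)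

From HB Require Import structures.
From mathcomp Require Import all_boot all_order all_fingroup.
Set Implicit Arguments. Unset Strict Implicit. Unset Printing Implicit Defensive.

(* hadd x y z  means  z \in x [+] y.                                   *)
Record Hyperfield := {
  hcar :> Type;
  hzero : hcar;
  hone : hcar;
  hmul : hcar -> hcar -> hcar;
  hadd : hcar -> hcar -> hcar -> Prop;
  hneg : hcar -> hcar;
  hinv : hcar -> hcar;
  hadd_nonempty : forall x y, exists z, hadd x y z;
  hadd_comm : forall x y z, hadd x y z <-> hadd y x z;
  hadd_assoc : forall x y z w,
      (exists u, hadd x y u /\ hadd u z w) <-> (exists u, hadd y z u /\ hadd x u w);
  hadd_zero : forall x z, hadd x hzero z <-> z = x;
  hneg_spec : forall x, hadd x (hneg x) hzero;
  hneg_unique : forall x y, hadd x y hzero -> y = hneg x;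
  hadd_rev : forall x y z, hadd y z x <-> hadd x (hneg y) z;
  hmulC : forall x y, hmul x y = hmul y x;
  hmulA : forall x y z, hmul x (hmul y z) = hmul (hmul x y) z;
  hmul1 : forall x, hmul hone x = x;
  hmul0 : forall x, hmul hzero x = hzero;
  hone_neq0 : hone <> hzero;
  hmul_neq0 : forall x y, x <> hzero -> y <> hzero -> hmul x y <> hzero;
  hinv_neq0 : forall x, x <> hzero -> hinv x <> hzero;
  hmulV : forall x, x <> hzero -> hmul x (hinv x) = hone;
  hmul_addr : forall x y z w,
      (exists u, hadd y z u /\ w = hmul x u) <-> hadd (hmul x y) (hmul x z) w
}.

Record TopHyperfield := {
  thf :> Hyperfield;
  topen : (thf -> Prop) -> Prop;
  topen_full : topen (fun _ => True);
  topen_union : forall (I : Type) (U : I -> thf -> Prop),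
      (forall i, topen (U i)) -> topen (fun x => exists i, U i x);
  topen_inter : forall U V, topen U -> topen V -> topen (fun x => U x /\ V x);
  topen_units : topen (fun x => x <> hzero thf);
  tmul_cont : forall x y U, topen U -> U (hmul x y) ->
      exists V W, [/\ topen V, topen W, V x, W y &
                      forall a b, V a -> W b -> U (hmul a b)];
  tinv_cont : forall x U, x <> hzero thf -> topen U -> U (hinv x) ->
      exists V, [/\ topen V, V x &
                 forall a, a <> hzero thf -> V a -> U (hinv a)]
}.

Section GP.
Variable F : Hyperfield.
Local Notation "0" := (hzero F).
Local Notation "1" := (hone F).

Fixpoint hsum (l : seq F) (z : F) : Prop :=
  match l with
  | [::] => z = 0
  | x :: l' => exists u, hsum l' u /\ hadd x u z
  end.

Definition hsign (b : bool) : F := if b then hneg 1 else 1.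

Variable E : finType.

Definition is_matroid_bases (B : {set {set E}}) : Prop :=
  B != set0 /\
  forall B1 B2, B1 \in B -> B2 \in B -> forall x, x \in B1 :\: B2 ->
    exists2 y, y \in B2 :\: B1 & (y |: (B1 :\ x)) \in B.

Definition matroid_rank (B : {set {set E}}) (r : nat) : Prop :=
  forall b, b \in B -> #|b| = r.

Variable r : nat.

Definition ordered_basis (B : {set {set E}}) (x : {ffun 'I_r -> E}) : Prop :=
  injective x /\ [set x i | i : 'I_r] \in B.

Definition alternating (phi : {ffun 'I_r -> E} -> F) : Prop :=
  forall (x : {ffun 'I_r -> E}) (s : 'S_r),
    phi [ffun i => x (s i)] = hmul (hsign (odd_perm s)) (phi x).

Definition drop_at (i : {ffun 'I_r.+1 -> E}) (k : 'I_r.+1) : {ffun 'I_r -> E} :=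
  [ffun t : 'I_r => i (lift k t)].

(* (e, j_1, ..., j_{r-1}) *)
Definition cons_at (e : E) (j : {ffun 'I_r.-1 -> E}) : {ffun 'I_r -> E} :=
  [ffun t : 'I_r => nth e (e :: codom j) t].

(* the Grassmann-Pluecker relation for (i, j); index k is 0-based, so the
   sign (-1)^k of the paper (1-based) becomes (-1)^(k+1) *)
Definition GP_rel (phi : {ffun 'I_r -> E} -> F)
    (i : {ffun 'I_r.+1 -> E}) (j : {ffun 'I_r.-1 -> E}) : Prop :=
  hsum [seq hmul (hsign (odd (nat_of_ord k).+1))
              (hmul (phi (drop_at i k)) (phi (cons_at (i k) j)))
       | k : 'I_r.+1 <- enum 'I_r.+1] 0.

Definition strong_GP (phi : {ffun 'I_r -> E} -> F) : Prop :=
  [/\ exists x, phi x <> 0,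
      alternating phi &
      (0 < r)%N -> forall (i : {ffun 'I_r.+1 -> E}) (j : {ffun 'I_r.-1 -> E}), GP_rel phi i j].

Definition weak_GP (phi : {ffun 'I_r -> E} -> F) : Prop :=
  [/\ exists x, phi x <> 0,
      alternating phi,
      (exists B, is_matroid_bases B /\
                 forall x, phi x <> 0 <-> ordered_basis B x) &
      (0 < r)%N -> forall (i : {ffun 'I_r.+1 -> E}) (j : {ffun 'I_r.-1 -> E}),
        #|[set i k | k : 'I_r.+1] :\: [set j t | t : 'I_r.-1]| = 3 ->
        GP_rel phi i j].

End GP.

Inductive GPkind := GPs | GPw.

Definition is_GP (F : Hyperfield) (star : GPkind) (E : finType) (r : nat)
    (phi : {ffun 'I_r -> E} -> F) : Prop :=
  match star with GPs => strong_GP phi | GPw => weak_GP phi end.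

(* [phi] \in Real^*_F(M), stated on a representative phi (membership is
   invariant under phi ~ a phi, so this is the quotient unfolded) *)
Definition in_Real (F : Hyperfield) (star : GPkind) (E : finType) (r : nat)
    (M : {set {set E}}) (phi : {ffun 'I_r -> E} -> F) : Prop :=
  is_GP star phi /\ forall x, phi x <> hzero F <-> ordered_basis M x.

Definition Real_nonempty (F : Hyperfield) (star : GPkind) (E : finType) (r : nat)
    (M : {set {set E}}) : Prop :=
  exists phi : {ffun 'I_r -> E} -> F, in_Real star M phi.

(* Every ordered basis of M inside A is an ordering of some A :\ a, so up to
   sign phit is given by one value per such a.  Start from any psi in Real(M)
   and rescale it by the torus: phi x = al * t(x_1) * ... * t(x_r) * psi x.
   This keeps the support, and keeps every Grassmann-Pluecker relation since
   all its terms pick up the same factor.  On an ordering of A :\ a it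
   multiplies psi by al * (prod_(e in A) t e) / t a, so choosing
   t a = psi / phit on a fixed ordering of A :\ a and al = 1 / prod_(e in A) t e
   makes phi agree with phit on A. *)
From HB Require Import structures.
From mathcomp Require Import all_boot all_order all_fingroup.
From Stdlib Require Import Classical.
Set Implicit Arguments. Unset Strict Implicit. Unset Printing Implicit Defensive.

Lemma hmulA_assoc (F : Hyperfield) : associative (@hmul F).
Proof. by move=> x y z; rewrite hmulA. Qed.

HB.instance Definition _ (F : Hyperfield) :=
  Monoid.isComLaw.Build (hcar F) (hone F) (@hmul F)
    (@hmulA_assoc F) (@hmulC F) (@hmul1 F).

Section HyperfieldFacts.
Variable F : Hyperfield.
Local Notation "0" := (hzero F).
Local Notation "1" := (hone F).
Local Notation mul := (@hmul F).

Lemma hmulr0 x : mul x 0 = 0. Proof. by rewrite hmulC hmul0. Qed.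

Lemma hmulr1 x : mul x 1 = x. Proof. by rewrite hmulC hmul1. Qed.

Lemma hmulCA x y z : mul x (mul y z) = mul y (mul x z).
Proof. by rewrite !hmulA (hmulC x y). Qed.

Lemma hmulKV x y : x <> 0 -> mul (hinv x) (mul x y) = y.
Proof. by move=> x0; rewrite hmulA (hmulC _ x) hmulV // hmul1. Qed.

Lemma hmulVK x y : x <> 0 -> mul x (mul (hinv x) y) = y.
Proof. by move=> x0; rewrite hmulA hmulV // hmul1. Qed.

Lemma hmul_neq0_iff a b : a <> 0 -> (mul a b <> 0 <-> b <> 0).
Proof.
move=> a0; split; last exact: hmul_neq0.
by move=> ab0 b0; apply: ab0; rewrite b0 hmulr0.
Qed.

Lemma hprod_neq0 (I : finType) (P : pred I) (f : I -> F) :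
  (forall i, P i -> f i <> 0) -> \big[mul/1]_(i | P i) f i <> 0.
Proof.
move=> f0; apply: (big_ind (fun v => v <> 0)) => //; first exact: hone_neq0.
by move=> a b; apply: hmul_neq0.
Qed.

Lemma hsum_mull c l z : hsum l z -> hsum (map (mul c) l) (mul c z).
Proof.
elim: l z => [|x l IHl] z /=; first by move=> ->; rewrite hmulr0.
case=> u [lu xuz]; exists (mul c u); split; first exact: IHl.
by apply/hmul_addr; exists z.
Qed.

End HyperfieldFacts.

Section TorusAction.
Variables (F : Hyperfield) (E : finType).
Local Notation "0" := (hzero F).
Local Notation mul := (@hmul F).

Definition tuple_weight (r : nat) (t : E -> F) (x : {ffun 'I_r -> E}) : F :=
  \big[mul/hone F]_(i < r) t (x i).

Definition rescale (r : nat) (al : F) (t : E -> F) (psi : {ffun 'I_r -> E} -> F)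
    (x : {ffun 'I_r -> E}) : F :=
  mul al (mul (tuple_weight t x) (psi x)).

Variable t : E -> F.
Hypothesis t_neq0 : forall e, t e <> 0.

Lemma tuple_weight_neq0 r (x : {ffun 'I_r -> E}) : tuple_weight t x <> 0.
Proof. exact: hprod_neq0. Qed.

Lemma tuple_weight_perm r (x : {ffun 'I_r -> E}) (s : 'S_r) :
  tuple_weight t [ffun i => x (s i)] = tuple_weight t x.
Proof.
rewrite /tuple_weight [RHS](reindex_inj (@perm_inj _ s)).
by apply: eq_bigr => i _; rewrite ffunE.
Qed.

Lemma tuple_weight_imset r (x : {ffun 'I_r -> E}) : injective x ->
  tuple_weight t x = \big[mul/hone F]_(e in [set x i | i : 'I_r]) t e.
Proof. by move=> x_inj; rewrite big_imset //; move=> i j _ _ /x_inj. Qed.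

Lemma tuple_weight_drop_at r (i : {ffun 'I_r.+1 -> E}) (k : 'I_r.+1) :
  mul (t (i k)) (tuple_weight t (drop_at i k)) = \big[mul/hone F]_(l < r.+1) t (i l).
Proof.
rewrite [RHS](bigD1_ord k) //=; congr mul.
by apply: eq_bigr => l _; rewrite ffunE.
Qed.

Lemma tuple_weight_cons_at r (e : E) (j : {ffun 'I_r -> E}) :
  tuple_weight t (cons_at (r := r.+1) e j) =
  mul (t e) (\big[mul/hone F]_(m < r) t (j m)).
Proof.
rewrite /tuple_weight big_ord_recl ffunE /=; congr mul.
apply: eq_bigr => m _; rewrite ffunE /= codomE (nth_map m) ?nth_ord_enum //.
by rewrite size_enum_ord ltn_ord.
Qed.

Variable al : F.
Hypothesis al_neq0 : al <> 0.

Lemma rescale_neq0_iff r (psi : {ffun 'I_r -> E} -> F) x :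
  rescale al t psi x <> 0 <-> psi x <> 0.
Proof.
by rewrite /rescale hmul_neq0_iff // hmul_neq0_iff //; apply: tuple_weight_neq0.
Qed.

Lemma rescale_alternating r (psi : {ffun 'I_r -> E} -> F) :
  alternating psi -> alternating (rescale al t psi).
Proof.
by move=> psi_alt x s; rewrite /rescale tuple_weight_perm psi_alt !(hmulCA _ (hsign _ _)).
Qed.

(* Every term of the relation for (i, j) is multiplied by
   al^2 * prod_l t (i l) * prod_m t (j m). *)
Lemma GP_rel_rescale r (psi : {ffun 'I_r -> E} -> F) i j :
  (0 < r)%N -> GP_rel psi i j -> GP_rel (rescale al t psi) i j.
Proof.
case: r psi i j => [//|r] psi i j _ /(hsum_mull
  (mul al (mul al (mul (\big[mul/hone F]_(l < r.+2) t (i l))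
                       (\big[mul/hone F]_(m < r) t (j m)))))).
rewrite hmulr0 /GP_rel -map_comp; congr hsum; apply: eq_map => k /=.
rewrite /rescale tuple_weight_cons_at -(tuple_weight_drop_at i k).
by rewrite mul.[AC (1*((1*2)*(1*3))) ((2*(5*((6*3)*7)))*(1*(4*8)))].
Qed.

Lemma is_GP_rescale star r (psi : {ffun 'I_r -> E} -> F) :
  is_GP star psi -> is_GP star (rescale al t psi).
Proof.
have nz (x : {ffun 'I_r -> E}) : psi x <> 0 -> rescale al t psi x <> 0.
  by move/rescale_neq0_iff.
case: star => [[[x /nz psix] /rescale_alternating alt GP]|].
  by split=> [|//|r0 i j]; [exists x | exact: GP_rel_rescale (GP r0 i j)].
case=> [[x /nz psix] /rescale_alternating alt [B [Bmat Bsupp]] GP].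
split=> [|//||r0 i j card3]; first by exists x.
  by exists B; split=> // x'; rewrite rescale_neq0_iff.
exact: GP_rel_rescale (GP r0 i j card3).
Qed.

Lemma in_Real_rescale star r M (psi : {ffun 'I_r -> E} -> F) :
  in_Real star M psi -> in_Real star M (rescale al t psi).
Proof.
case=> psiGP psi_supp; split; first exact: is_GP_rescale.
by move=> x; rewrite rescale_neq0_iff.
Qed.

End TorusAction.

Section Tuples.
Variables (E : finType) (r : nat).

Lemma exists_injective_enum (S : {set E}) : #|S| = r ->
  exists2 x : {ffun 'I_r -> E}, injective x & [set x i | i : 'I_r] = S.
Proof.
move=> cardS; exists [ffun i => enum_val (A := S) (cast_ord (esym cardS) i)].
  by move=> i j; rewrite !ffunE => /enum_val_inj/cast_ord_inj.
apply/setP => e; apply/imsetP/idP => [[i _ ->]|Se]; first by rewrite ffunE enum_valP.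
by exists (cast_ord cardS (enum_rank_in Se e)); rewrite // ffunE cast_ordK enum_rankK_in.
Qed.

Lemma perm_of_eq_image (x y : {ffun 'I_r -> E}) : injective x ->
  [set x i | i : 'I_r] = [set y i | i : 'I_r] ->
  exists s : 'S_r, x = [ffun i => y (s i)].
Proof.
move=> x_inj xy.
have x_in_y i : exists j, x i = y j.
  have /imsetP[j _ ->] : x i \in [set y i | i : 'I_r] by rewrite -xy imset_f.
  by exists j.
have [f xf] := fin_all_exists x_in_y.
have f_inj : injective f by move=> a b fab; apply: x_inj; rewrite !xf fab.
by exists (perm f_inj); apply/ffunP => i; rewrite !ffunE permE -xf.
Qed.

Lemma image_eq_setD1 (A : {set E}) (x : {ffun 'I_r -> E}) :
  #|A| = r.+1 -> injective x -> (forall i, x i \in A) ->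
  exists2 a, a \in A & [set x i | i : 'I_r] = A :\ a.
Proof.
move=> cardA x_inj xA; set S := [set x i | i : 'I_r].
have SA : S \subset A by apply/subsetP => _ /imsetP[i _ ->].
have cardS : #|S| = r by rewrite card_imset // card_ord.
have [a] : exists a, a \in A :\: S.
  by apply/set0Pn; rewrite -card_gt0 cardsD (setIidPr SA) cardA cardS subSnn.
rewrite inE => /andP[aS aA]; exists a => //; apply/eqP.
have [cardAa] : r.+1 = #|A :\ a|.+1 by rewrite -cardA (cardsD1 a A) aA.
rewrite eqEcard -cardAa cardS leqnn andbT.
by apply/subsetP => e Se; rewrite in_setD1 (subsetP SA) // andbT; apply: contraNneq aS => <-.
Qed.

End Tuples.

Section Extension.
Variables (F : Hyperfield) (E : finType) (r : nat).
Variables (M : {set {set E}}) (A : {set E}).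
Local Notation "0" := (hzero F).
Local Notation mul := (@hmul F).

Hypothesis cardA : #|A| = r.+1.

Variable phit : {ffun 'I_r -> E} -> F.
Hypothesis phit_alt : forall (x : {ffun 'I_r -> E}) (s : 'S_r), (forall i, x i \in A) ->
  phit [ffun i => x (s i)] = mul (hsign F (odd_perm s)) (phit x).
Hypothesis phit_supp : forall x : {ffun 'I_r -> E}, (forall i, x i \in A) ->
  (phit x <> 0 <-> ordered_basis M x).

Variable psi : {ffun 'I_r -> E} -> F.
Hypothesis psi_alt : alternating psi.
Hypothesis psi_supp : forall x, psi x <> 0 <-> ordered_basis M x.

Variable rep : E -> {ffun 'I_r -> E}.
Hypothesis rep_inj : forall a, a \in A -> injective (rep a).
Hypothesis rep_image : forall a, a \in A -> [set rep a i | i : 'I_r] = A :\ a.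

Definition basis_ratio (a : E) : F := mul (phit (rep a)) (hinv (psi (rep a))).

Definition ratio_weight (e : E) : F :=
  if (e \in A) && (A :\ e \in M) then hinv (basis_ratio e) else hone F.

Definition extension : {ffun 'I_r -> E} -> F :=
  rescale (hinv (\big[mul/hone F]_(e in A) ratio_weight e)) ratio_weight psi.

Lemma rep_in_A a : a \in A -> forall i, rep a i \in A.
Proof.
move=> aA i; have : rep a i \in [set rep a i | i : 'I_r] by apply: imset_f.
by rewrite rep_image // => /setD1P[].
Qed.

Lemma rep_ordered_basis a : a \in A -> A :\ a \in M -> ordered_basis M (rep a).
Proof. by move=> aA aM; split; rewrite ?rep_image //; apply: rep_inj. Qed.

Lemma basis_ratio_neq0 a : a \in A -> A :\ a \in M -> basis_ratio a <> 0.
Proof.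
move=> aA aM; have rep_basis := rep_ordered_basis aA aM.
apply: hmul_neq0; first exact/(phit_supp (rep_in_A aA)).
exact/hinv_neq0/psi_supp.
Qed.

Lemma ratio_weight_neq0 e : ratio_weight e <> 0.
Proof.
rewrite /ratio_weight; case: ifP => [/andP[eA eM]|_]; last exact: hone_neq0.
exact/hinv_neq0/basis_ratio_neq0.
Qed.

Lemma total_weight_neq0 : \big[mul/hone F]_(e in A) ratio_weight e <> 0.
Proof. by apply: hprod_neq0 => e _; apply: ratio_weight_neq0. Qed.

Lemma extension_neq0_iff x : extension x <> 0 <-> ordered_basis M x.
Proof.
rewrite rescale_neq0_iff; [exact: psi_supp | exact: ratio_weight_neq0 |].
by apply: hinv_neq0; apply: total_weight_neq0.
Qed.

Lemma extension_in_Real star : in_Real star M psi -> in_Real star M extension.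
Proof.
apply: in_Real_rescale; [exact: ratio_weight_neq0 | apply: hinv_neq0].
exact: total_weight_neq0.
Qed.

Lemma extension_alternating : alternating extension.
Proof. exact/rescale_alternating. Qed.

Lemma extension_rep a : a \in A -> A :\ a \in M -> extension (rep a) = phit (rep a).
Proof.
move=> aA aM; set P := \big[mul/hone F]_(e in A) ratio_weight e.
have wa : ratio_weight a = hinv (basis_ratio a) by rewrite /ratio_weight aA aM.
have split_P : mul (ratio_weight a) (tuple_weight ratio_weight (rep a)) = P.
  rewrite /P (bigD1 a) //= tuple_weight_imset ?rep_image //; last exact: rep_inj.
  by congr mul; apply: eq_bigl => e; rewrite in_setD1 andbC.
have weight_rep : tuple_weight ratio_weight (rep a) = mul (basis_ratio a) P.
  by rewrite -split_P wa hmulVK //; apply: basis_ratio_neq0.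
have psi_rep : psi (rep a) <> 0 by apply/psi_supp/rep_ordered_basis.
rewrite /extension /rescale -/P weight_rep (hmulC _ P) -hmulA hmulKV.
  by rewrite /basis_ratio -hmulA (hmulC (hinv _)) hmulV // hmulr1.
exact: total_weight_neq0.
Qed.

Lemma extension_agrees (x : {ffun 'I_r -> E}) :
  (forall i, x i \in A) -> extension x = phit x.
Proof.
move=> xA; have [x_basis|not_basis] := classic (ordered_basis M x); last first.
  have zero_of (f : {ffun 'I_r -> E} -> F) : (f x <> 0 <-> ordered_basis M x) -> f x = 0.
    by move=> fsupp; apply: NNPP => /fsupp.
  by rewrite (zero_of phit (phit_supp xA)) zero_of //; apply: extension_neq0_iff.
have [x_inj xM] := x_basis.
have [a aA x_image] := image_eq_setD1 cardA x_inj xA.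
have [s ->] : exists s : 'S_r, x = [ffun i => rep a (s i)].
  by apply: perm_of_eq_image; rewrite // rep_image.
have aM : A :\ a \in M by rewrite -x_image.
by rewrite extension_alternating phit_alt ?extension_rep //; apply: rep_in_A.
Qed.

End Extension.

Theorem lemma5p8 (F : TopHyperfield) (star : GPkind) (E : finType) (r : nat)
    (M : {set {set E}}) (HM : is_matroid_bases M) (HMr : matroid_rank M r)
    (Hreal : Real_nonempty F star r M)
    (A : {set E}) (HA : #|A| = r.+1)
    (phit : {ffun 'I_r -> E} -> F)
    (Halt : forall (x : {ffun 'I_r -> E}) (s : 'S_r), (forall t, x t \in A) ->
        phit [ffun i => x (s i)] = hmul (hsign F (odd_perm s)) (phit x))
    (Hsupp : forall x : {ffun 'I_r -> E}, (forall t, x t \in A) ->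
        (phit x <> hzero F <-> ordered_basis M x)) :
  exists phi : {ffun 'I_r -> E} -> F,
    in_Real star M phi /\
    forall x : {ffun 'I_r -> E}, (forall t, x t \in A) -> phi x = phit x.
Proof.
have [psi psi_real] := Hreal; have [psi_GP psi_supp] := psi_real.
have psi_alt : alternating psi by case: star psi_GP {Hreal psi_real} => -[].
have enum_setD1 a : exists x : {ffun 'I_r -> E},
    a \in A -> injective x /\ [set x i | i : 'I_r] = A :\ a.
  have [aA|_] := boolP (a \in A); last by exists [ffun _ => a].
  have [|x x_inj x_image] := @exists_injective_enum E r (A :\ a); last by exists x.
  by apply/eq_add_S; rewrite -HA (cardsD1 a A) aA.
have [rep rep_spec] := fin_all_exists enum_setD1.
have rep_inj a : a \in A -> injective (rep a) by move/rep_spec=> [].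
have rep_image a : a \in A -> [set rep a i | i : 'I_r] = A :\ a by move/rep_spec=> [].
exists (extension M A phit psi rep); split.
  exact: (extension_in_Real Hsupp psi_supp rep_inj rep_image psi_real).
by move=> x; apply: (extension_agrees HA Halt Hsupp psi_alt psi_supp rep_inj rep_image).
Qed.
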